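(* Let $\mathcal{A}\subseteq\mathbb{R}^3$ and let $\varphi_1,\ldots,\varphi_N\in L^2(\mathcal{A})$ be pairwise non-parallel with correlation matrix $\boldsymbol{\Psi}=\int_{\mathcal{A}}\boldsymbol{\varphi}^{\mathsf{H}}(\mathbf{r})\boldsymbol{\varphi}(\mathbf{r})\,\mathrm{d}\mathbf{r}\in\mathbb{C}^{N\times N}$ positive definite, where $\boldsymbol{\varphi}(\mathbf{r})=[\varphi_1(\mathbf{r}),\ldots,\varphi_N(\mathbf{r})]$. Let $\boldsymbol{\Psi}=\mathbf{U}\boldsymbol{\Lambda}\mathbf{U}^{\mathsf{H}}$ be an eigendecomposition with $\mathbf{U}$ unitary and $\boldsymbol{\Lambda}=\mathrm{diag}(\lambda_1,\ldots,\lambda_N)$, $\lambda_n>0$. For a Hermitian $\mathbf{M}\in\mathbb{C}^{N\times N}$ define the operator $T_{\mathbf{M}}$ on $L^2(\mathcal{A})$ with kernel $\delta(\mathbf{r}-\mathbf{r}')-\boldsymbol{\varphi}(\mathbf{r})\mathbf{M}\boldsymbol{\varphi}^{\mathsf{H}}(\mathbf{r}')$, i.e. $(T_{\mathbf{M}}f)(\mathbf{r})=f(\mathbf{r})-\boldsymbol{\varphi}(\mathbf{r})\mathbf{M}\int_{\mathcal{A}}\boldsymbol{\varphi}^{\mathsf{H}}(\mathbf{r}')f(\mathbf{r}')\,\mathrm{d}\mathbf{r}'$. Let $C_\varphi=T_{-\mathbf{I}_N}$ (kernel $\delta(\mathbf{r}-\mathbf{r}')+\boldsymbol{\varphi}(\mathbf{r})\boldsymbol{\varphi}^{\mathsf{H}}(\mathbf{r}')$)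 and $\overline{B}_\varphi=T_{\overline{\mathbf{B}}_{\boldsymbol\Psi}}$ with $\overline{\mathbf{B}}_{\boldsymbol\Psi}=\mathbf{U}\,\mathrm{diag}(\overline{\lambda}_1,\ldots,\overline{\lambda}_N)\mathbf{U}^{\mathsf{H}}$, $\overline{\lambda}_n=\frac{1+\sqrt{1+\lambda_n}}{\lambda_n\sqrt{1+\lambda_n}}$. Then $\overline{B}_\varphi C_\varphi\overline{B}_\varphi$ is the identity operator, i.e. in kernel form $\iint_{\mathcal{A}^2}\overline{B}_\varphi(\mathbf{r}_1,\mathbf{r})C_\varphi(\mathbf{r},\mathbf{r}')\overline{B}_\varphi(\mathbf{r}',\mathbf{r}_2)\,\mathrm{d}\mathbf{r}'\mathrm{d}\mathbf{r}=\delta(\mathbf{r}_1-\mathbf{r}_2)$.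
   Context: Kernels containing $\delta(\mathbf{r}-\mathbf{r}')$ denote the identity plus a finite-rank integral operator; kernel identities with $\delta$ on the right mean operator identities equal to the identity. *)

From mathcomp Require Import all_boot all_order all_algebra.
From mathcomp Require Import all_classical all_reals all_analysis.
From mathcomp Require Import complex.
Import Order.TTheory GRing.Theory Num.Theory.

Set Implicit Arguments.
Unset Strict Implicit.
Unset Printing Implicit Defensive.

Local Open Scope ring_scope.
Local Open Scope classical_set_scope.
Local Open Scope complex_scope.

Definition R3 (R : realType) := ((R * R) * R)%type.

Definition leb3 (R : realType) :=
  ((@lebesgue_measure R \x @lebesgue_measure R) \x @lebesgue_measure R)%E.

Definition cRe (R : realType) (z : R[i]) : R := complex.Re z.
Definition cIm (R : realType) (z : R[i]) : R := complex.Im z.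

Definition cnorm2 (R : realType) (z : R[i]) : R := cRe z ^+ 2 + cIm z ^+ 2.

(* f : R^3 -> C is (a representative of) an element of L^2(A):
   measurable on A and |f|^2 Lebesgue integrable over A. *)
Definition L2 (R : realType) (A : set (R3 R)) (f : R3 R -> R[i]) : Prop :=
  [/\ measurable_fun A (fun x => cRe (f x)),
      measurable_fun A (fun x => cIm (f x)) &
      (@leb3 R).-integrable A (fun x => (cnorm2 (f x))%:E)].

Definition cint (R : realType) (A : set (R3 R)) (f : R3 R -> R[i]) : R[i] :=
  (Rintegral (@leb3 R) A (fun x => cRe (f x)))%:C
  + 'i * (Rintegral (@leb3 R) A (fun x => cIm (f x)))%:C.

Definition parallel (R : realType) (A : set (R3 R)) (f g : R3 R -> R[i]) : Prop :=
  exists c : R[i],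
    {ae @leb3 R, forall x, A x -> f x = c * g x} \/
    {ae @leb3 R, forall x, A x -> g x = c * f x}.

Definition mxH (R : realType) (m n : nat) (M : 'M[R[i]]_(m, n)) : 'M[R[i]]_(n, m) :=
  (map_mx conjc M)^T.

Definition hermitian (R : realType) (N : nat) (M : 'M[R[i]]_N) : Prop :=
  mxH M = M.
Definition posdef (R : realType) (N : nat) (M : 'M[R[i]]_N) : Prop :=
  hermitian M /\
  forall u : 'cV[R[i]]_N, u != 0 -> 0 < (mxH u *m M *m u) ord0 ord0.

Definition unitary (R : realType) (N : nat) (U : 'M[R[i]]_N) : Prop :=
  U *m mxH U = 1%:M /\ mxH U *m U = 1%:M.

Definition phirow (R : realType) (N : nat) (phi : 'I_N -> R3 R -> R[i])
  (r : R3 R) : 'rV[R[i]]_N := \row_i phi i r.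

Definition corr (R : realType) (N : nat) (A : set (R3 R))
  (phi : 'I_N -> R3 R -> R[i]) : 'M[R[i]]_N :=
  \matrix_(i, j) cint A (fun r => conjc (phi i r) * phi j r).

Definition coefs (R : realType) (N : nat) (A : set (R3 R))
  (phi : 'I_N -> R3 R -> R[i]) (f : R3 R -> R[i]) : 'cV[R[i]]_N :=
  \col_i cint A (fun r => conjc (phi i r) * f r).

Definition Top (R : realType) (N : nat) (A : set (R3 R))
  (phi : 'I_N -> R3 R -> R[i]) (M : 'M[R[i]]_N) (f : R3 R -> R[i]) :
  R3 R -> R[i] :=
  fun r => f r - (phirow phi r *m M *m coefs A phi f) ord0 ord0.

Definition lambdabar (R : realType) (l : R) : R :=
  (1 + Num.sqrt (1 + l)) / (l * Num.sqrt (1 + l)).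

Definition Bbar (R : realType) (N : nat) (U : 'M[R[i]]_N) (lam : 'I_N -> R) :
  'M[R[i]]_N :=
  U *m diag_mx (\row_i (lambdabar (lam i))%:C) *m mxH U.

(* Write c(f) = int_A phi^H f.  Every T_M sends f to f - phi M c(f), and
   c(f - phi v) = c(f) - Psi v; hence T_M T_M' = T_K with
   K = M + M' - M Psi M'.  The operator Bbar C Bbar is therefore T_K for a
   matrix K that is a polynomial in Psi and Bbar; diagonalising both with U,
   the eigenvalues of K are -(l (1 + l) b^2 - 2 (1 + l) b + 1) with
   b = lambdabar l, and they vanish because lambdabar l is a root of this
   quadratic. *)

From mathcomp Require Import all_boot all_order all_algebra.
From mathcomp Require Import all_classical all_reals all_analysis.
From mathcomp Require Import complex ring lra measurable_realfun.
Import Order.TTheory GRing.Theory Num.Theory.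

Set Implicit Arguments.
Unset Strict Implicit.
Unset Printing Implicit Defensive.

Local Open Scope ring_scope.
Local Open Scope complex_scope.

Lemma cReM (R : realType) (a b : R[i]) :
  cRe (a * b) = cRe a * cRe b - cIm a * cIm b.
Proof. by case: a; case: b. Qed.

Lemma cImM (R : realType) (a b : R[i]) :
  cIm (a * b) = cRe a * cIm b + cIm a * cRe b.
Proof. by case: a; case: b. Qed.

Lemma cReD (R : realType) (a b : R[i]) : cRe (a + b) = cRe a + cRe b.
Proof. by case: a; case: b. Qed.

Lemma cImD (R : realType) (a b : R[i]) : cIm (a + b) = cIm a + cIm b.
Proof. by case: a; case: b. Qed.

Lemma cReJM (R : realType) (a b : R[i]) :
  cRe (a^* * b) = cRe a * cRe b + cIm a * cIm b.
Proof. by case: a; case: b => * /=; rewrite mulNr opprK. Qed.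

Lemma cImJM (R : realType) (a b : R[i]) :
  cIm (a^* * b) = cRe a * cIm b - cIm a * cRe b.
Proof. by case: a; case: b => * /=; rewrite mulNr. Qed.

Lemma cReIm_eq (R : realType) (a : R[i]) : a = (cRe a)%:C + 'i * (cIm a)%:C.
Proof.
case: a => x y; apply/eqP.
by rewrite eq_complex /= !(mul0r, mul1r, subr0, addr0, add0r) !eqxx.
Qed.

Lemma cnorm2_ge0 (R : realType) (a : R[i]) : 0 <= cnorm2 a.
Proof. by rewrite addr_ge0 ?sqr_ge0. Qed.

Lemma normr_mulD_le (R : realFieldType) (x y z t : R) :
  `|x * y + z * t| <= (x ^+ 2 + z ^+ 2) + (y ^+ 2 + t ^+ 2).
Proof.
have := sqr_ge0 (x - y); have := sqr_ge0 (x + y).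
have := sqr_ge0 (z - t); have := sqr_ge0 (z + t).
by rewrite ler_norml => *; apply/andP; split; nra.
Qed.

Lemma normr_mulB_le (R : realFieldType) (x y z t : R) :
  `|x * t - z * y| <= (x ^+ 2 + z ^+ 2) + (y ^+ 2 + t ^+ 2).
Proof.
by rewrite -mulNr -[z ^+ 2]sqrrN [y ^+ 2 + _]addrC normr_mulD_le.
Qed.

Section complex_integral.
Variables (R : realType) (A : set (R3 R)).
Hypothesis mA : measurable A.
Local Notation mu := (@leb3 R).
Local Notation rintegrable f := (mu.-integrable A (EFin \o f)).

Lemma integrable_add (f g : R3 R -> R) :
  rintegrable f -> rintegrable g -> rintegrable (fun x => f x + g x).
Proof. exact: (@integrableD _ _ _ mu A mA). Qed.

Lemma integrable_scale (k : R) (f : R3 R -> R) :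
  rintegrable f -> rintegrable (fun x => k * f x).
Proof. exact: (@integrableZl _ _ _ mu A mA k). Qed.

(* Restating [RintegralD] and [RintegralZl] at [mu] fixes the measurable
   structure of the integrands, so that rewriting yields syntactically equal
   integrals that [ring] can treat as the same atom. *)
Lemma Rintegral_add (f g : R3 R -> R) : rintegrable f -> rintegrable g ->
  Rintegral mu A (fun x => f x + g x) = Rintegral mu A f + Rintegral mu A g.
Proof. exact: RintegralD. Qed.

Lemma Rintegral_scale (k : R) (f : R3 R -> R) : rintegrable f ->
  Rintegral mu A (fun x => k * f x) = k * Rintegral mu A f.
Proof. exact: RintegralZl. Qed.

Definition cintegrable (h : R3 R -> R[i]) :=
  rintegrable (fun x => cRe (h x)) /\ rintegrable (fun x => cIm (h x)).

Lemma cintegrable0 : cintegrable (fun _ => 0).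
Proof.
by split; apply: (@eq_integrable _ _ _ mu A mA _ _ _ (integrable0 _ _)).
Qed.

Lemma cintegrableD h1 h2 : cintegrable h1 -> cintegrable h2 ->
  cintegrable (fun x => h1 x + h2 x).
Proof.
move=> [? ?] [? ?].
by split; under eq_fun do rewrite ?cReD ?cImD; exact: integrable_add.
Qed.

Lemma cintegrableZ w h : cintegrable h -> cintegrable (fun x => w * h x).
Proof.
move=> [? ?]; split.
- under eq_fun do rewrite cReM -mulNr.
  by apply: integrable_add; exact: integrable_scale.
- under eq_fun do rewrite cImM.
  by apply: integrable_add; exact: integrable_scale.
Qed.

Lemma cintegrable_sum I (s : seq I) (F : I -> R3 R -> R[i]) :
  (forall k, cintegrable (F k)) -> cintegrable (fun x => \sum_(k <- s) F k x).
Proof.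
move=> iF; elim: s => [|k s IH].
  by under eq_fun do rewrite big_nil; exact: cintegrable0.
by under eq_fun do rewrite big_cons; exact: cintegrableD.
Qed.

Lemma cintegrable_conjM a b : L2 A a -> L2 A b ->
  cintegrable (fun x => (a x)^* * b x).
Proof.
move=> [mRa mIa ia] [mRb mIb ib].
have iab : rintegrable (fun x => cnorm2 (a x) + cnorm2 (b x)).
  exact: integrable_add.
have dom x : 0 <= cnorm2 (a x) + cnorm2 (b x) by rewrite addr_ge0 ?cnorm2_ge0.
split; apply: (@le_integrable _ _ _ mu A mA _ _ _ _ iab) => [|x _].
- apply/measurable_EFinP; rewrite (funext (fun x => cReJM (a x) (b x))).
  by apply: measurable_funD; apply: measurable_funM.
- by rewrite /= lee_fin (ger0_norm (dom x)) cReJM normr_mulD_le.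
- apply/measurable_EFinP; rewrite (funext (fun x => cImJM (a x) (b x))).
  by apply: measurable_funB; apply: measurable_funM.
- by rewrite /= lee_fin (ger0_norm (dom x)) cImJM normr_mulB_le.
Qed.

Lemma cint0 : cint A (fun _ => 0) = 0.
Proof. by rewrite /cint /= !Rintegral_cst // !mul0r mulr0 addr0. Qed.

Lemma cintD h1 h2 : cintegrable h1 -> cintegrable h2 ->
  cint A (fun x => h1 x + h2 x) = cint A h1 + cint A h2.
Proof.
move=> [? ?] [? ?]; rewrite /cint /=.
rewrite (funext (fun x => cReD (h1 x) (h2 x))).
rewrite (funext (fun x => cImD (h1 x) (h2 x))).
by rewrite !Rintegral_add // !rmorphD /=; ring.
Qed.

Lemma cintZ w h : cintegrable h -> cint A (fun x => w * h x) = w * cint A h.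
Proof.
move=> [? ?]; rewrite /cint /=.
rewrite (funext (fun x => cReM w (h x))) (funext (fun x => cImM w (h x))).
under eq_fun do rewrite -mulNr.
rewrite !Rintegral_add ?Rintegral_scale //; try exact: integrable_scale.
set X := Rintegral _ _ _; set Y := Rintegral _ _ _.
rewrite [in RHS](cReIm_eq w) !(rmorphB, rmorphD, rmorphM, rmorphN) /=.
apply/eqP; rewrite -subr_eq0; apply/eqP.
transitivity (- ('i ^+ 2 + 1) * ((cIm w)%:C * Y%:C)); first by ring.
by rewrite sqr_i addNr oppr0 mul0r.
Qed.

Lemma cint_sum I (s : seq I) (F : I -> R3 R -> R[i]) :
  (forall k, cintegrable (F k)) ->
  cint A (fun x => \sum_(k <- s) F k x) = \sum_(k <- s) cint A (F k).
Proof.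
move=> iF; elim: s => [|k s IH].
  by under eq_fun do rewrite big_nil; rewrite big_nil cint0.
under eq_fun do rewrite big_cons.
by rewrite cintD ?IH ?big_cons //; exact: cintegrable_sum.
Qed.

End complex_integral.

Definition comp_mx (C : pzRingType) (n : nat) (Psi M M' : 'M[C]_n) :=
  M + M' - M *m Psi *m M'.

Section finite_rank_perturbation.
Variables (R : realType) (A : set (R3 R)) (N : nat).
Variable phi : 'I_N -> R3 R -> R[i].
Hypotheses (mA : measurable A) (phiL2 : forall n, L2 A (phi n)).
Local Notation Psi := (corr A phi).

Lemma coefs_sub_phirow g v : L2 A g ->
  coefs A phi (fun r => g r - (phirow phi r *m v) ord0 ord0) =
  coefs A phi g - Psi *m v.
Proof.
move=> gL2; apply/colP => i; rewrite !mxE.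
have iF k : cintegrable A (fun r => - v k ord0 * ((phi i r)^* * phi k r)).
  by apply: (cintegrableZ mA); exact: (cintegrable_conjM mA).
have -> : (fun r => (phi i r)^* * (g r - (phirow phi r *m v) ord0 ord0)) =
    (fun r => (phi i r)^* * g r + \sum_k - v k ord0 * ((phi i r)^* * phi k r)).
  apply/funext => r; rewrite mulrBr mxE mulr_sumr -sumrN; congr (_ + _).
  by apply: eq_bigr => k _; rewrite mxE; ring.
rewrite cintD ?cint_sum //;
  [|exact: (cintegrable_conjM mA) | exact: (cintegrable_sum mA)].
rewrite -sumrN; congr (_ + _); apply: eq_bigr => k _.
by rewrite (cintZ mA) ?mxE; [ring | exact: (cintegrable_conjM mA)].
Qed.

Lemma TopE M g :
  Top A phi M g =
  fun r => g r - (phirow phi r *m (M *m coefs A phi g)) ord0 ord0.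
Proof. by rewrite /Top; under eq_fun do rewrite -mulmxA. Qed.

Lemma coefs_Top M g : L2 A g ->
  coefs A phi (Top A phi M g) = coefs A phi g - Psi *m (M *m coefs A phi g).
Proof. by move=> gL2; rewrite TopE coefs_sub_phirow. Qed.

Lemma Top_comp M M' g : L2 A g ->
  Top A phi M (Top A phi M' g) = Top A phi (comp_mx Psi M M') g.
Proof.
move=> gL2; rewrite [in LHS]TopE coefs_Top // [Top _ _ _ g]TopE TopE.
apply/funext => r; rewrite -addrA -opprD; congr (_ - _).
have -> : comp_mx Psi M M' *m coefs A phi g =
    M' *m coefs A phi g + M *m (coefs A phi g - Psi *m (M' *m coefs A phi g)).
  rewrite /comp_mx mulmxBr !mulmxBl !mulmxDl !mulmxA.
  by rewrite addrA [M' *m _ + _]addrC.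
by rewrite mulmxDr [in RHS]mxE.
Qed.

Lemma Top0 g : Top A phi 0 g = g.
Proof. by apply/funext => r; rewrite /Top mulmx0 mul0mx mxE subr0. Qed.

End finite_rank_perturbation.

Section spectral_calculus.
Variables (R : realType) (N : nat) (U : 'M[R[i]]_N).
Hypothesis U_unitary : unitary U.

Definition spectral_mx (d : 'I_N -> R[i]) := U *m diag_mx (\row_i d i) *m mxH U.

Lemma spectral_mxD d e :
  spectral_mx d + spectral_mx e = spectral_mx (fun i => d i + e i).
Proof.
rewrite /spectral_mx -mulmxDl -mulmxDr -raddfD /=; congr (_ *m diag_mx _ *m _).
by apply/rowP => i; rewrite !mxE.
Qed.

Lemma spectral_mxN d : - spectral_mx d = spectral_mx (fun i => - d i).
Proof.
rewrite /spectral_mx -mulNmx -mulmxN -raddfN /=; congr (_ *m diag_mx _ *m _).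
by apply/rowP => i; rewrite !mxE.
Qed.

Lemma spectral_mxM d e :
  spectral_mx d *m spectral_mx e = spectral_mx (fun i => d i * e i).
Proof.
have [_ UHU] := U_unitary.
rewrite /spectral_mx !mulmxA -[_ *m mxH U *m U]mulmxA UHU mulmx1.
rewrite -[U *m _ *m _]mulmxA mulmx_diag; congr (_ *m diag_mx _ *m _).
by apply/rowP => i; rewrite !mxE.
Qed.

Lemma spectral_mx1 : spectral_mx (fun _ => 1) = 1%:M.
Proof.
have [UUH _] := U_unitary.
rewrite /spectral_mx (_ : \row__ 1 = const_mx 1) ?diag_const_mx ?mulmx1 //.
by apply/rowP => i; rewrite !mxE.
Qed.

Lemma spectral_mx0 d : (forall i, d i = 0) -> spectral_mx d = 0.
Proof.
move=> d0; rewrite /spectral_mx (_ : \row_i d i = 0).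
  by rewrite linear0 mulmx0 mul0mx.
by apply/rowP => i; rewrite !mxE d0.
Qed.

End spectral_calculus.

Lemma lambdabar_root (R : realType) (l : R) : 0 < l ->
  l * (1 + l) * lambdabar l ^+ 2 - 2 * (1 + l) * lambdabar l + 1 = 0.
Proof.
move=> l_gt0; rewrite /lambdabar.
have s2 : Num.sqrt (1 + l) ^+ 2 = 1 + l by rewrite sqr_sqrtr // addr_ge0 // ltW.
set s := Num.sqrt (1 + l) in s2 *.
have -> : l = s ^+ 2 - 1 by rewrite s2 addrC addKr.
by field; apply/andP; split; apply/eqP => s_eq; nra.
Qed.

Lemma comp_mx_Bbar_sandwich (R : realType) (N : nat) (Psi U : 'M[R[i]]_N)
    (lam : 'I_N -> R) :
  unitary U -> (forall n, 0 < lam n) ->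
  Psi = U *m diag_mx (\row_n (lam n)%:C) *m mxH U ->
  comp_mx Psi (Bbar U lam) (comp_mx Psi (- 1%:M) (Bbar U lam)) = 0.
Proof.
move=> Uu lam_gt0 ->; rewrite /comp_mx.
rewrite -[Bbar U lam]/(spectral_mx U (fun i => (lambdabar (lam i))%:C)).
rewrite -[_ *m diag_mx _ *m _]/(spectral_mx U (fun i => (lam i)%:C)).
rewrite -(spectral_mx1 Uu) !(spectral_mxN, spectral_mxM Uu, spectral_mxD).
apply: spectral_mx0 => i.
have := lambdabar_root (lam_gt0 i).
move: (lam i) (lambdabar (lam i)) => l b root.
transitivity (- (l * (1 + l) * b ^+ 2 - 2 * (1 + l) * b + 1))%:C.
  by rewrite !(rmorphN, rmorphB, rmorphD, rmorphM, rmorphXn, rmorph1) /=; ring.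
by rewrite root oppr0.
Qed.

Theorem lemma6 (R : realType) (N : nat) (A : set (R3 R))
  (phi : 'I_N -> R3 R -> R[i]) (U : 'M[R[i]]_N) (lam : 'I_N -> R) :
  measurable A ->
  (forall n, L2 A (phi n)) ->
  (forall n m, n != m -> ~ parallel A (phi n) (phi m)) ->
  posdef (corr A phi) ->
  unitary U ->
  (forall n, 0 < lam n) ->
  corr A phi = U *m diag_mx (\row_n (lam n)%:C) *m mxH U ->
  forall f : R3 R -> R[i], L2 A f ->
  forall r, A r ->
    Top A phi (Bbar U lam) (Top A phi (- 1%:M) (Top A phi (Bbar U lam) f)) r
    = f r.
Proof.
move=> mA phiL2 _ _ Uu lam_gt0 PsiE f fL2 r _.
rewrite [Top _ _ _ (Top _ _ _ f)]Top_comp // Top_comp //.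
by rewrite (comp_mx_Bbar_sandwich Uu lam_gt0 PsiE) Top0.
Qed.
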